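(* In the setting below, the map $\bar D\mapsto s_\mathrm{eq}(\bar s,\bar D)$ is differentiable for $\bar D\in(D_{\min},D_{\max})$, it satisfies $\mu(s_\mathrm{eq})=\bar D-G_1(s_\mathrm{eq}-\bar s)$, and $$\frac{\partial s_\mathrm{eq}}{\partial\bar D}(\bar s,\bar D)=\frac{1}{G_1+\mu'(s_\mathrm{eq}(\bar s,\bar D))}.$$ Setting: $s_\mathrm{in}>0$, $0<s_{\min}<s_\mathrm{in}$, $0<D_{\min}<D_{\max}$, $G_1>0$, $\bar s\in[s_{\min},s_\mathrm{in})$; $\mu:[0,s_\mathrm{in}]\to[0,\infty)$ is continuously differentiable with $\mu(0)=0$, $\mu(s)>0$ for $s>0$, $D_{\min}<\mu(s)$ for all $s\in[s_{\min},s_\mathrm{in}]$, $D_{\max}>\mu(s)$ for all $s\in[0,s_\mathrm{in}]$; $G_1>-\min_{[0,s_\mathrm{in}]}\mu'$ and $G_1>-(\mu(s_\mathrm{in})-\bar D)/(s_\mathrm{in}-\bar s)$ for all considered $\bar D$.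
   Context: $s_\mathrm{eq}(\bar s,\bar D)=\lim_{t\to\infty}s(t)$, where $(s,b)$ solves $\dot s=-\mu(s)b+D(s_\mathrm{in}-s)$, $\dot b=\mu(s)b-Db$ with $D=\operatorname{sat}_{[D_{\min},D_{\max}]}(\bar D-G_1(s-\bar s))$ from any initial condition in $[0,s_\mathrm{in})\times(0,\infty)$. The saturation function is $\operatorname{sat}_{[D_{\min},D_{\max}]}(x)=D_{\max}$ if $x>D_{\max}$, $=x$ if $x\in[D_{\min},D_{\max}]$, $=D_{\min}$ if $x<D_{\min}$. *)

From Stdlib Require Import Reals Lra.
Open Scope R_scope.

Definition sat (dmin dmax x : R) : R :=
  if Rlt_dec dmax x then dmax else if Rlt_dec x dmin then dmin else x.

Definition has_deriv_within (a b : R) (f : R -> R) (x l : R) : Prop :=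
  forall eps, 0 < eps -> exists delta, 0 < delta /\
    forall h, h <> 0 -> Rabs h < delta -> a <= x + h <= b ->
      Rabs ((f (x + h) - f x) / h - l) < eps.

Definition continuous_within (a b : R) (f : R -> R) (x : R) : Prop :=
  forall eps, 0 < eps -> exists delta, 0 < delta /\
    forall y, a <= y <= b -> Rabs (y - x) < delta -> Rabs (f y - f x) < eps.

(* (s,b) is a solution on [0,oo) of the closed-loop chemostat
     s' = -mu(s) b + D (s_in - s),  b' = mu(s) b - D b,
     D = sat_[Dmin,Dmax](Dbar - G1 (s - sbar)),
   starting at (s0,b0): continuous on [0,oo) (right-continuous at 0),
   differentiable on (0,oo), and s stays in the domain [0,s_in] of mu. *)
Definition closed_loop_solution (mu : R -> R) (s_in Dmin Dmax G1 sbar Dbar : R)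
    (s0 b0 : R) (s b : R -> R) : Prop :=
  s 0 = s0 /\ b 0 = b0 /\
  (forall eps, 0 < eps -> exists delta, 0 < delta /\
     forall t, 0 <= t < delta -> Rabs (s t - s0) < eps /\ Rabs (b t - b0) < eps) /\
  (forall t, 0 <= t -> 0 <= s t <= s_in) /\
  (forall t, 0 < t ->
     let D := sat Dmin Dmax (Dbar - G1 * (s t - sbar)) in
     derivable_pt_lim s t (- mu (s t) * b t + D * (s_in - s t)) /\
     derivable_pt_lim b t (mu (s t) * b t - D * b t)).

(* x = s_eq(sbar,Dbar): the limit as t -> oo of s(t), for every solution
   from every initial condition in [0,s_in) x (0,oo). *)
Definition is_s_eq (mu : R -> R) (s_in Dmin Dmax G1 sbar Dbar x : R) : Prop :=
  forall s0 b0 (s b : R -> R),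
    0 <= s0 < s_in -> 0 < b0 ->
    closed_loop_solution mu s_in Dmin Dmax G1 sbar Dbar s0 b0 s b ->
    forall eps, 0 < eps -> exists T, forall t, T <= t -> Rabs (s t - x) < eps.

(* Write H(x) = mu(x) + G1 (x - sbar).  The hypotheses on G1 make H strictly
   increasing on (0,s_in) with H(0) < Dbar < H(s_in), so H(x) = Dbar has a
   root x(Dbar) in (0,s_in).  Along any solution the total mass defect
   w = s + b - s_in satisfies w' = -D w with D >= Dmin > 0, so w -> 0, and the
   net growth rate F(s) = mu(s) - D(s) of the biomass has the sign of
   H(s) - Dbar.  Hence once w is small, s is pushed into every neighbourhood
   [x - e, x + e] of the root and trapped there: s(t) -> x(Dbar).  The root is
   the inverse function of the increasing map H, whose derivative is
   mu' + G1 > 0, which gives the derivative formula. *)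
From Stdlib Require Import Reals Lra ClassicalEpsilon Classical.
Open Scope R_scope.

Lemma continuity_pt_intro f x :
  (forall eps, 0 < eps -> exists d, 0 < d /\
     forall y, Rabs (y - x) < d -> Rabs (f y - f x) < eps) ->
  continuity_pt f x.
Proof.
  intros H eps Heps. destruct (H eps Heps) as [d [Hd H']].
  exists d; split; [lra|]. intros y [_ Hy]. exact (H' y Hy).
Qed.

Lemma continuity_pt_elim f x : continuity_pt f x ->
  forall eps, 0 < eps -> exists d, 0 < d /\
    forall y, Rabs (y - x) < d -> Rabs (f y - f x) < eps.
Proof.
  intros H eps Heps. destruct (H eps Heps) as [d [Hd H']].
  exists d; split; [lra|]. intros y Hy.
  destruct (Req_dec y x) as [->|Hne].
  - unfold Rminus; rewrite Rplus_opp_r, Rabs_R0; lra.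
  - apply (H' y). split; [split; [exact I| auto]| exact Hy].
Qed.

Lemma step_right_below (f : R -> R) c L l t2 :
  derivable_pt_lim f c l -> (f c = L -> l < 0) -> f c <= L -> c < t2 ->
  exists h, 0 < h /\ c + h <= t2 /\ f (c + h) <= L.
Proof.
  intros Hl Hlneg Hfc Hct.
  destruct (Rle_lt_or_eq _ _ Hfc) as [Hlt|Heq].
  - destruct (continuity_pt_elim f c (derivable_continuous_pt f c (exist _ l Hl))
        (L - f c) ltac:(lra)) as [d [Hd0 Hd']].
    set (h := Rmin (d/2) (t2 - c)).
    assert (0 < h) by (apply Rmin_glb_lt; lra).
    assert (h <= d/2) by apply Rmin_l. assert (h <= t2 - c) by apply Rmin_r.
    exists h. split; [lra| split; [lra|]].
    assert (Hyc : Rabs (c + h - c) < d) by (unfold Rabs; destruct Rcase_abs; lra).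
    specialize (Hd' _ Hyc). revert Hd'; unfold Rabs; destruct Rcase_abs; intros; lra.
  - assert (l < 0) by (apply Hlneg; auto).
    destruct (Hl (- l) ltac:(lra)) as [[d Hd] Hd']; simpl in Hd'.
    set (h := Rmin (d/2) (t2 - c)).
    assert (0 < h) by (apply Rmin_glb_lt; lra).
    assert (h <= d/2) by apply Rmin_l. assert (h <= t2 - c) by apply Rmin_r.
    exists h. split; [lra| split; [lra|]].
    assert (Hhd : Rabs h < d) by (unfold Rabs; destruct Rcase_abs; lra).
    specialize (Hd' h ltac:(lra) Hhd).
    assert (Hq : (f (c + h) - f c) / h < 0)
      by (revert Hd'; unfold Rabs; destruct Rcase_abs; intros; lra).
    assert (f (c + h) - f c = (f (c + h) - f c) / h * h) by (field; lra).
    nra.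
Qed.

(* Barrier principle: if f is differentiable on [t1,oo) and strictly
   decreasing whenever it equals L, then f t1 <= L forces f <= L on [t1,oo).
   The proof looks at the supremum of the last stretch below L. *)
Lemma barrier (f : R -> R) (t1 L : R) :
  (forall t, t1 <= t -> exists l, derivable_pt_lim f t l /\ (f t = L -> l < 0)) ->
  f t1 <= L -> forall t, t1 <= t -> f t <= L.
Proof.
  intros Hd H1 t2 Ht2. destruct (Rle_or_lt (f t2) L) as [|Hgt]; auto. exfalso.
  set (E := fun t => t1 <= t <= t2 /\ f t <= L).
  assert (Hb : bound E) by (exists t2; intros y [[_ ?] _]; auto).
  assert (Hne : exists y, E y) by (exists t1; unfold E; lra).
  destruct (completeness E Hb Hne) as [c [Hub Hlub]].
  assert (Hc1 : t1 <= c) by (apply Hub; unfold E; lra).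
  assert (Hc2 : c <= t2) by (apply Hlub; intros y [[_ ?] _]; auto).
  destruct (Hd c Hc1) as [l [Hl Hlneg]].
  assert (Hfc : f c <= L).
  { destruct (Rle_or_lt (f c) L) as [|Hfc]; auto. exfalso.
    destruct (continuity_pt_elim f c (derivable_continuous_pt f c (exist _ l Hl))
        (f c - L) ltac:(lra)) as [d [Hd0 Hd']].
    assert (c <= c - d/2); [|lra].
    apply Hlub. intros y [[Hy1 Hy2] Hy3].
    destruct (Rle_or_lt y (c - d/2)); auto.
    assert (y <= c) by (apply Hub; unfold E; lra).
    assert (Hyc : Rabs (y - c) < d) by (unfold Rabs; destruct Rcase_abs; lra).
    specialize (Hd' y Hyc). revert Hd'; unfold Rabs; destruct Rcase_abs; intros; lra. }
  assert (Hct : c < t2) by (destruct (Rle_lt_or_eq _ _ Hc2); auto; subst; lra).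
  destruct (step_right_below f c L l t2 Hl Hlneg Hfc Hct) as [h [Hh [Hh2 Hh3]]].
  assert (c + h <= c); [apply Hub; unfold E; lra| lra].
Qed.

Lemma mvt_upper_bound f f' a b M :
  (forall t, a <= t <= b -> derivable_pt_lim f t (f' t)) ->
  (forall t, a <= t <= b -> f' t <= M) -> a <= b -> f b - f a <= M * (b - a).
Proof.
  intros Hd HM Hab. destruct (Rle_lt_or_eq _ _ Hab) as [Hlt|<-]; [|lra].
  destruct (MVT_cor2 f f' a b Hlt Hd) as [c [-> Hc]].
  specialize (HM c ltac:(lra)). nra.
Qed.

Lemma mvt_lower_bound f f' a b M :
  (forall t, a <= t <= b -> derivable_pt_lim f t (f' t)) ->
  (forall t, a <= t <= b -> M <= f' t) -> a <= b -> M * (b - a) <= f b - f a.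
Proof.
  intros Hd HM Hab. destruct (Rle_lt_or_eq _ _ Hab) as [Hlt|<-]; [|lra].
  destruct (MVT_cor2 f f' a b Hlt Hd) as [c [-> Hc]].
  specialize (HM c ltac:(lra)). nra.
Qed.

(* A nonnegative q with q' <= -k q (k > 0) on (0,oo) becomes and stays
   smaller than any e > 0: it cannot stay above e (it would decrease at rate
   k e forever), and it is nonincreasing. *)
Lemma decay_to_zero (q q' : R -> R) (k : R) :
  0 < k ->
  (forall t, 0 < t -> derivable_pt_lim q t (q' t)) ->
  (forall t, q' t <= - k * q t) -> (forall t, 0 <= q t) ->
  forall e, 0 < e -> exists T, 1 <= T /\ forall t, T <= t -> q t < e.
Proof.
  intros Hk Hq Hq' Hq0 e He.
  assert (Hex : exists t0, 1 <= t0 /\ q t0 < e).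
  { apply NNPP. intro Hn.
    assert (Hall : forall t, 1 <= t -> e <= q t).
    { intros t Ht. destruct (Rlt_or_le (q t) e); auto. exfalso; apply Hn; exists t; auto. }
    set (t := 1 + (q 1 / (k * e) + 1)).
    assert (0 <= q 1 / (k * e))
      by (apply Rmult_le_pos; [auto| left; apply Rinv_0_lt_compat; nra]).
    assert (Hle : q t - q 1 <= - (k * e) * (t - 1)).
    { apply mvt_upper_bound with q'; [intros; apply Hq; lra| | unfold t; lra].
      intros r Hr. specialize (Hall r ltac:(lra)). specialize (Hq' r). nra. }
    assert (- (k * e) * (t - 1) = - q 1 - k * e) by (unfold t; field; nra).
    specialize (Hq0 t). nra. }
  destruct Hex as [t0 [Ht0 Hqt0]]. exists t0. split; auto. intros t Ht.
  assert (q t - q t0 <= 0 * (t - t0)); [|lra].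
  apply mvt_upper_bound with q'; auto.
  - intros; apply Hq; lra.
  - intros r Hr. specialize (Hq' r). specialize (Hq0 r). nra.
Qed.

Lemma derivable_pt_lim_exp_scal K t :
  derivable_pt_lim (fun t => exp (K * t)) t (K * exp (K * t)).
Proof.
  pose proof (derivable_pt_lim_comp (mult_real_fct K id) exp t _ _
     (derivable_pt_lim_scal id K t 1 (derivable_pt_lim_id t)) (derivable_pt_lim_exp _)) as H.
  replace (K * exp (K * t)) with (exp (mult_real_fct K id t) * (K * 1))
    by (unfold mult_real_fct, id; ring).
  exact H.
Qed.

Lemma inv_close q k eps : 0 < k -> 0 < eps ->
  Rabs (q - k) < Rmin (k/2) (eps * k * k / 2) -> Rabs (1 / q - 1 / k) < eps.
Proof.
  intros Hk He Hq.
  assert (H1 : Rabs (q - k) < k/2) by (eapply Rlt_le_trans; [exact Hq| apply Rmin_l]).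
  assert (H2 : Rabs (q - k) < eps * k * k / 2)
    by (eapply Rlt_le_trans; [exact Hq| apply Rmin_r]).
  assert (Hq2 : k / 2 < q) by (revert H1; unfold Rabs; destruct Rcase_abs; intros; lra).
  replace (1 / q - 1 / k) with ((k - q) / (q * k)) by (field; lra).
  unfold Rdiv. rewrite Rabs_mult, Rabs_inv, (Rabs_pos_eq (q * k)) by nra.
  rewrite <- Rabs_Ropp. replace (- (k - q)) with (q - k) by ring.
  apply (Rmult_lt_reg_r (q * k)); [nra|].
  rewrite Rmult_assoc, Rinv_l, Rmult_1_r by nra.
  assert (eps * k * (k/2) < eps * k * q) by (apply Rmult_lt_compat_l; [nra| lra]).
  nra.
Qed.

Section InverseFunction.
Variables (H g : R -> R) (a b lo hi : R).
Hypothesis Hg : forall D, lo < D < hi -> a < g D < b /\ H (g D) = D.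
Hypothesis Hmono : forall y z, a < y -> y < z -> z < b -> H y < H z.

(* Such an inverse is continuous: g (D0 + h) stays within r of g D0 for
   small h, because H maps [g D0 - r, g D0 + r] onto a neighbourhood of D0. *)
Lemma inverse_continuous D0 r : lo < D0 < hi -> 0 < r ->
  a < g D0 - r -> g D0 + r < b ->
  exists dl, 0 < dl /\ forall h, Rabs h < dl ->
    lo < D0 + h < hi /\ Rabs (g (D0 + h) - g D0) < r.
Proof.
  intros HD0 Hr Hra Hrb.
  set (x0 := g D0) in *. destruct (Hg D0 HD0) as [Hx0 HHx0]. fold x0 in Hx0, HHx0.
  assert (Hup : D0 < H (x0 + r)) by (rewrite <- HHx0; apply Hmono; lra).
  assert (Hlo : H (x0 - r) < D0) by (rewrite <- HHx0; apply Hmono; lra).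
  exists (Rmin (Rmin (H (x0 + r) - D0) (D0 - H (x0 - r))) (Rmin (D0 - lo) (hi - D0))).
  split; [repeat apply Rmin_glb_lt; lra|]. intros h Hh.
  assert (Hh1 : Rabs h < Rmin (H (x0 + r) - D0) (D0 - H (x0 - r)))
    by (eapply Rlt_le_trans; [exact Hh| apply Rmin_l]).
  assert (Hh2 : Rabs h < Rmin (D0 - lo) (hi - D0))
    by (eapply Rlt_le_trans; [exact Hh| apply Rmin_r]).
  pose proof (Rmin_l (H (x0 + r) - D0) (D0 - H (x0 - r))).
  pose proof (Rmin_r (H (x0 + r) - D0) (D0 - H (x0 - r))).
  pose proof (Rmin_l (D0 - lo) (hi - D0)). pose proof (Rmin_r (D0 - lo) (hi - D0)).
  assert (Habs : - Rabs h <= h <= Rabs h) by (unfold Rabs; destruct Rcase_abs; lra).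
  assert (HDh : lo < D0 + h < hi) by lra.
  split; [exact HDh|].
  destruct (Hg (D0 + h) HDh) as [Hx HHx]. set (x := g (D0 + h)) in *.
  assert (Hxu : x < x0 + r).
  { destruct (Rlt_or_le x (x0 + r)) as [|Hge]; auto.
    destruct (Rle_lt_or_eq _ _ Hge) as [Hlt|Heq].
    - assert (H (x0 + r) < H x) by (apply Hmono; lra). lra.
    - rewrite <- Heq in HHx. lra. }
  assert (Hxl : x0 - r < x).
  { destruct (Rlt_or_le (x0 - r) x) as [|Hge]; auto.
    destruct (Rle_lt_or_eq _ _ Hge) as [Hlt|Heq].
    - assert (H x < H (x0 - r)) by (apply Hmono; lra). lra.
    - rewrite Heq in HHx. lra. }
  unfold Rabs; destruct Rcase_abs; lra.
Qed.

Lemma inverse_derivative D0 k : lo < D0 < hi ->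
  derivable_pt_lim H (g D0) k -> 0 < k -> derivable_pt_lim g D0 (1 / k).
Proof.
  intros HD0 HdH Hk eps Heps.
  set (x0 := g D0) in *. destruct (Hg D0 HD0) as [Hx0 HHx0]. fold x0 in Hx0, HHx0.
  assert (Hep : 0 < Rmin (k/2) (eps * k * k / 2)).
  { apply Rmin_glb_lt; [lra|]. assert (0 < eps * k * k) by (repeat apply Rmult_lt_0_compat; lra). lra. }
  destruct (HdH _ Hep) as [[d1 Hd1pos] Hd1]; simpl in Hd1.
  set (r := Rmin d1 (Rmin ((x0 - a)/2) ((b - x0)/2))).
  assert (Hr : 0 < r) by (unfold r; repeat apply Rmin_glb_lt; lra).
  assert (Hr1 : r <= d1) by apply Rmin_l.
  assert (Hr2 : r <= (x0 - a)/2) by (unfold r; eapply Rle_trans; [apply Rmin_r| apply Rmin_l]).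
  assert (Hr3 : r <= (b - x0)/2) by (unfold r; eapply Rle_trans; [apply Rmin_r| apply Rmin_r]).
  destruct (inverse_continuous D0 r HD0 Hr ltac:(fold x0; lra) ltac:(fold x0; lra))
    as [dl [Hdl Hcont]].
  exists (mkposreal dl Hdl). simpl. intros h Hh Hhd.
  destruct (Hcont h Hhd) as [HDh Hclose]. fold x0 in Hclose.
  destruct (Hg (D0 + h) HDh) as [_ HHx]. set (x := g (D0 + h)) in *.
  set (dd := x - x0).
  assert (Hdd : dd <> 0).
  { unfold dd; intro Hz. assert (x = x0) by lra. rewrite H0, HHx0 in HHx. lra. }
  specialize (Hd1 dd Hdd ltac:(unfold dd; lra)).
  replace (x0 + dd) with x in Hd1 by (unfold dd; ring).
  rewrite HHx, HHx0 in Hd1. replace (D0 + h - D0) with h in Hd1 by ring.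
  replace (dd / h) with (1 / (h / dd)) by (field; auto).
  apply inv_close; auto.
Qed.

End InverseFunction.

Lemma sat_lipschitz a b x y : a <= b -> Rabs (sat a b x - sat a b y) <= Rabs (x - y).
Proof. intros. unfold sat; repeat destruct Rlt_dec; unfold Rabs; repeat destruct Rcase_abs; lra. Qed.

Lemma sat_range a b x : a <= b -> a <= sat a b x <= b.
Proof. intros. unfold sat; repeat destruct Rlt_dec; lra. Qed.

(* Projection onto [lo,hi]; composing with it extends a function defined on
   [lo,hi] to R, which lets us use the global theorems IVT and
   [continuity_ab_min] for functions only known on [lo,hi]. *)
Definition clamp lo hi x := Rmax lo (Rmin hi x).

Lemma clamp_in lo hi x : lo <= hi -> lo <= clamp lo hi x <= hi.
Proof. intros. unfold clamp, Rmax, Rmin; repeat destruct Rle_dec; lra. Qed.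

Lemma clamp_id lo hi x : lo <= x <= hi -> clamp lo hi x = x.
Proof. intros. unfold clamp, Rmax, Rmin; repeat destruct Rle_dec; lra. Qed.

Lemma clamp_lipschitz lo hi x y : lo <= hi ->
  Rabs (clamp lo hi x - clamp lo hi y) <= Rabs (x - y).
Proof.
  intros. unfold clamp, Rmax, Rmin; repeat destruct Rle_dec;
  unfold Rabs; repeat destruct Rcase_abs; lra.
Qed.

Lemma continuous_clamp lo hi f : lo <= hi ->
  (forall x, lo <= x <= hi -> continuous_within lo hi f x) ->
  forall c, continuity_pt (fun x => f (clamp lo hi x)) c.
Proof.
  intros Hlh Hc c. apply continuity_pt_intro. intros eps Heps.
  destruct (Hc (clamp lo hi c) (clamp_in lo hi c Hlh) eps Heps) as [d [Hd H']].
  exists d; split; auto. intros y Hy. apply H'; [apply clamp_in; auto|].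
  eapply Rle_lt_trans; [apply clamp_lipschitz; auto| exact Hy].
Qed.

Lemma deriv_within_continuous a b f x l :
  has_deriv_within a b f x l -> continuous_within a b f x.
Proof.
  intros H eps Heps. destruct (H 1 Rlt_0_1) as [d1 [Hd1 H1]].
  pose proof (Rabs_pos l).
  exists (Rmin d1 (eps / (Rabs l + 1))).
  split; [apply Rmin_glb_lt; auto; apply Rdiv_lt_0_compat; lra|].
  intros y Hy Hyx.
  destruct (Req_dec y x) as [->|Hne]; [unfold Rminus; rewrite Rplus_opp_r, Rabs_R0; lra|].
  set (h := y - x).
  assert (Hy' : y = x + h) by (unfold h; ring). rewrite Hy' in Hy.
  assert (Hh1 : Rabs h < d1) by (eapply Rlt_le_trans; [exact Hyx| apply Rmin_l]).
  assert (Hh2 : Rabs h < eps / (Rabs l + 1))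
    by (eapply Rlt_le_trans; [exact Hyx| apply Rmin_r]).
  specialize (H1 h ltac:(unfold h; lra) Hh1 Hy).
  set (q := (f (x + h) - f x) / h) in H1.
  assert (Hq : f y - f x = q * h) by (unfold q; rewrite Hy'; field; unfold h; lra).
  rewrite Hq, Rabs_mult.
  assert (Rabs q < Rabs l + 1).
  { replace q with ((q - l) + l) by ring. pose proof (Rabs_triang (q - l) l); lra. }
  assert (Rabs h * (Rabs l + 1) < eps).
  { apply (Rmult_lt_compat_r (Rabs l + 1)) in Hh2; [|lra].
    unfold Rdiv in Hh2. rewrite Rmult_assoc, Rinv_l in Hh2; lra. }
  pose proof (Rabs_pos h). pose proof (Rabs_pos q). nra.
Qed.

Lemma deriv_within_interior a b f x l :
  has_deriv_within a b f x l -> a < x < b -> derivable_pt_lim f x l.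
Proof.
  intros H Hx eps Heps. destruct (H eps Heps) as [d [Hd H']].
  assert (Hp : 0 < Rmin d (Rmin (x - a) (b - x))) by (repeat apply Rmin_glb_lt; lra).
  exists (mkposreal _ Hp). simpl. intros h Hh Hlt.
  pose proof (Rmin_l d (Rmin (x - a) (b - x))). pose proof (Rmin_r d (Rmin (x - a) (b - x))).
  pose proof (Rmin_l (x - a) (b - x)). pose proof (Rmin_r (x - a) (b - x)).
  apply H'; auto; [lra|]. revert Hlt; unfold Rabs; destruct Rcase_abs; intros; lra.
Qed.

Lemma continuous_within_plus_lipschitz a b f g x K : 0 <= K ->
  continuous_within a b f x ->
  (forall y, Rabs (g y - g x) <= K * Rabs (y - x)) ->
  continuous_within a b (fun y => f y + g y) x.
Proof.
  intros HK Hf Hg eps Heps.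
  destruct (Hf (eps/2) ltac:(lra)) as [d [Hd H']].
  exists (Rmin d (eps / (2 * (K + 1)))).
  split; [apply Rmin_glb_lt; auto; apply Rdiv_lt_0_compat; lra|].
  intros y Hy Hyx.
  assert (H1 : Rabs (y - x) < d) by (eapply Rlt_le_trans; [exact Hyx| apply Rmin_l]).
  assert (H2 : Rabs (y - x) < eps / (2 * (K + 1)))
    by (eapply Rlt_le_trans; [exact Hyx| apply Rmin_r]).
  specialize (H' y Hy H1). specialize (Hg y).
  assert (Rabs (y - x) * (2 * (K+1)) < eps).
  { apply (Rmult_lt_compat_r (2*(K+1))) in H2; [|lra]. unfold Rdiv in H2.
    rewrite Rmult_assoc, Rinv_l in H2; lra. }
  pose proof (Rabs_pos (y - x)).
  replace (f y + g y - (f x + g x)) with ((f y - f x) + (g y - g x)) by ring.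
  pose proof (Rabs_triang (f y - f x) (g y - g x)). nra.
Qed.

Lemma continuous_within_opp a b f x :
  continuous_within a b f x -> continuous_within a b (fun y => - f y) x.
Proof.
  intros Hf eps Heps. destruct (Hf eps Heps) as [d [Hd H']].
  exists d; split; auto. intros y Hy Hyx.
  replace (- f y - - f x) with (- (f y - f x)) by ring. rewrite Rabs_Ropp. auto.
Qed.

Lemma positive_lower_bound lo hi f a b : lo <= a -> a <= b -> b <= hi ->
  (forall x, lo <= x <= hi -> continuous_within lo hi f x) ->
  (forall x, a <= x <= b -> 0 < f x) ->
  exists m, 0 < m /\ forall x, a <= x <= b -> m <= f x.
Proof.
  intros Ha Hab Hb Hc Hpos.
  destruct (continuity_ab_min (fun y => f (clamp lo hi y)) a b Hab
      ltac:(intros; apply continuous_clamp; auto; lra)) as [mx [Hmin Hmx]].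
  exists (f mx). rewrite clamp_id in Hmin by lra. split; [apply Hpos; auto|].
  intros x Hx. specialize (Hmin x Hx). rewrite clamp_id in Hmin by lra. exact Hmin.
Qed.

Section ClosedLoopDynamics.
Variables (mu Df : R -> R) (s_in Dmin Dmax : R) (s b : R -> R).
Hypothesis HDmin : 0 < Dmin.
Hypothesis HDf : forall x, Dmin <= Df x <= Dmax.
Hypothesis Hder : forall t, 0 < t ->
  derivable_pt_lim s t (- mu (s t) * b t + Df (s t) * (s_in - s t)) /\
  derivable_pt_lim b t (mu (s t) * b t - Df (s t) * b t).

(* The mass defect w = s + b - s_in obeys w' = -Df(s) w, hence tends to 0. *)
Lemma mass_defect_vanishes e : 0 < e ->
  exists T, 1 <= T /\ forall t, T <= t -> Rabs (s t + b t - s_in) < e.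
Proof.
  intros He.
  set (w := fun t => s t + b t - s_in).
  assert (Hw : forall t, 0 < t -> derivable_pt_lim w t (- Df (s t) * w t)).
  { intros t Ht. destruct (Hder t Ht) as [Hs Hb].
    pose proof (derivable_pt_lim_minus _ _ _ _ _
      (derivable_pt_lim_plus _ _ _ _ _ Hs Hb) (derivable_pt_lim_const s_in t)) as H.
    unfold w. replace (- Df (s t) * (s t + b t - s_in)) with
      (- mu (s t) * b t + Df (s t) * (s_in - s t) + (mu (s t) * b t - Df (s t) * b t) - 0)
      by ring.
    exact H. }
  destruct (decay_to_zero (fun t => w t * w t) (fun t => - 2 * Df (s t) * (w t * w t))
      (2 * Dmin) ltac:(lra)) with (e := e * e) as [T [HT HTw]].
  - intros t Ht. pose proof (derivable_pt_lim_mult w w t _ _ (Hw t Ht) (Hw t Ht)) as H.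
    replace (- 2 * Df (s t) * (w t * w t))
      with (- Df (s t) * w t * w t + w t * (- Df (s t) * w t)) by ring.
    exact H.
  - intro t. specialize (HDf (s t)). assert (0 <= w t * w t) by nra. nra.
  - intro t. nra.
  - nra.
  - exists T. split; auto. intros t Ht. specialize (HTw t Ht). simpl in HTw.
    fold (w t). unfold Rabs; destruct Rcase_abs; nra.
Qed.

(* Starting from b0 > 0 the biomass stays positive: b e^{Kt} with
   K = Dmax + 1 is increasing whenever it is positive. *)
Lemma biomass_positive b0 :
  (forall t, 0 < t -> 0 <= mu (s t)) -> 0 < b0 ->
  (forall eps, 0 < eps -> exists delta, 0 < delta /\
     forall t, 0 <= t < delta -> Rabs (b t - b0) < eps) ->
  forall t, 0 < t -> 0 < b t.
Proof.
  intros Hmu Hb0 Hc t Ht.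
  destruct (Hc (b0/2) ltac:(lra)) as [d [Hd Hd']].
  set (t1 := Rmin t (d/2)).
  assert (Ht1 : 0 < t1) by (apply Rmin_glb_lt; lra).
  assert (Ht1t : t1 <= t) by apply Rmin_l.
  assert (Ht1d : t1 <= d/2) by apply Rmin_r.
  assert (Hbt1 : 0 < b t1).
  { specialize (Hd' t1 ltac:(lra)). revert Hd'; unfold Rabs; destruct Rcase_abs; intros; lra. }
  set (K := Dmax + 1).
  set (phi := fun t => b t * exp (K * t)).
  assert (Hphi1 : 0 < phi t1) by (unfold phi; pose proof (exp_pos (K * t1)); nra).
  assert (Hle : - phi t <= - phi t1).
  { apply (barrier (fun t => - phi t) t1 (- phi t1)); [| lra | auto].
    intros r Hr.
    set (br := mu (s r) * b r - Df (s r) * b r).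
    exists (- (br * exp (K * r) + b r * (K * exp (K * r)))). split.
    - apply (derivable_pt_lim_opp phi).
      exact (derivable_pt_lim_mult b (fun t => exp (K * t)) r _ _
        (proj2 (Hder r ltac:(lra))) (derivable_pt_lim_exp_scal K r)).
    - intro Heq. assert (Hpr : phi r = phi t1) by lra.
      assert (He : 0 < exp (K * r)) by apply exp_pos.
      assert (Hbr : 0 < b r).
      { assert (0 < b r * exp (K * r)) by (unfold phi in Hpr, Hphi1; lra).
        destruct (Rlt_or_le 0 (b r)); auto. nra. }
      specialize (Hmu r ltac:(lra)). specialize (HDf (s r)).
      assert (0 < (mu (s r) - Df (s r) + K) * b r) by (apply Rmult_lt_0_compat; unfold K; lra).
      assert (0 < (mu (s r) - Df (s r) + K) * b r * exp (K * r)) by (apply Rmult_lt_0_compat; auto).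
      unfold br. nra. }
  unfold phi in *. pose proof (exp_pos (K * t)). destruct (Rlt_or_le 0 (b t)); auto. nra.
Qed.

Hypothesis Hs : forall t, 0 < t -> 0 <= s t <= s_in.
Hypothesis Hmu : forall t, 0 < t -> 0 <= mu (s t) <= Dmax.
Hypothesis Hbpos : forall t, 0 < t -> 0 < b t.

Section Upper.
Variables (L m1 : R).
Hypothesis HL : L < s_in.
Hypothesis Hm1 : 0 < m1.
Hypothesis HF1 : forall x, L <= x <= s_in -> m1 <= mu x - Df x.

(* If s stayed above L, b would grow at least linearly, contradicting
   s + b < s_in + e. *)
Lemma eventually_below T0 e : 0 < T0 ->
  (forall t, T0 <= t -> Rabs (s t + b t - s_in) < e) ->
  exists t1, T0 <= t1 /\ s t1 <= L.
Proof.
  intros HT0 Hw. apply NNPP. intro Hn.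
  assert (Hall : forall t, T0 <= t -> L < s t).
  { intros t Ht. destruct (Rlt_or_le L (s t)); auto. exfalso; apply Hn; exists t; auto. }
  assert (Hgrowth : forall t, T0 <= t -> m1 * b t <= mu (s t) * b t - Df (s t) * b t).
  { intros t Ht. specialize (HF1 (s t) ltac:(split; [left; apply Hall| apply Hs]; lra)).
    specialize (Hbpos t ltac:(lra)). nra. }
  set (B := b T0). assert (HB : 0 < B) by (apply Hbpos; lra).
  assert (HbB : forall t, T0 <= t -> B <= b t).
  { intros t Ht. assert (- b t <= - B); [|lra].
    apply (barrier (fun t => - b t) T0 (- B)); [| unfold B; lra| auto].
    intros r Hr. exists (- (mu (s r) * b r - Df (s r) * b r)). split.
    - apply (derivable_pt_lim_opp b). apply Hder; lra.
    - intro Heq. specialize (Hgrowth r Hr). nra. }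
  set (t := T0 + ((s_in + e) / (m1 * B) + 1)).
  assert (HmB : 0 < m1 * B) by (apply Rmult_lt_0_compat; lra).
  assert (0 <= (s_in + e) / (m1 * B)).
  { pose proof (Hs T0 HT0). specialize (Hw T0 ltac:(lra)).
    pose proof (Rabs_pos (s T0 + b T0 - s_in)).
    apply Rmult_le_pos; [lra| left; apply Rinv_0_lt_compat; auto]. }
  assert (Hlow : (m1 * B) * (t - T0) <= b t - b T0).
  { apply (mvt_lower_bound b (fun r => mu (s r) * b r - Df (s r) * b r));
      [intros r Hr; apply Hder; lra| | unfold t; lra].
    intros r Hr. specialize (HbB r ltac:(lra)). specialize (Hgrowth r ltac:(lra)). nra. }
  assert ((m1 * B) * (t - T0) = s_in + e + m1 * B) by (unfold t; field; lra).
  specialize (Hw t ltac:(unfold t; lra)). specialize (Hs t ltac:(unfold t; lra)).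
  revert Hw; unfold Rabs; destruct Rcase_abs; unfold B in *; intros; lra.
Qed.

(* Once s <= L and the mass defect is small, s' < 0 whenever s = L. *)
Lemma stays_below t1 e : 0 < t1 -> (Dmax + 1) * e <= (s_in - L) * m1 ->
  (forall t, t1 <= t -> Rabs (s t + b t - s_in) < e) ->
  s t1 <= L -> forall t, t1 <= t -> s t <= L.
Proof.
  intros Ht1 He Hw Hst1. apply (barrier s t1 L); auto.
  intros r Hr. exists (- mu (s r) * b r + Df (s r) * (s_in - s r)).
  split; [apply Hder; lra|]. intro Hsr.
  specialize (Hw r Hr). specialize (Hmu r ltac:(lra)). specialize (HF1 (s r) ltac:(lra)).
  set (w := s r + b r - s_in) in *.
  replace (b r) with (w + s_in - s r) by (unfold w; ring).
  assert (- (mu (s r) * w) <= (Dmax + 1) * Rabs w).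
  { pose proof (Rle_abs (- w)). rewrite Rabs_Ropp in H. pose proof (Rabs_pos w). nra. }
  assert ((Dmax + 1) * Rabs w < (Dmax + 1) * e) by (apply Rmult_lt_compat_l; lra).
  rewrite Hsr in *. nra.
Qed.

End Upper.

Section Lower.
Variables (L' m2 : R).
Hypothesis HL' : 0 <= L' < s_in.
Hypothesis Hm2 : 0 < m2.
Hypothesis HF2 : forall x, 0 <= x <= L' -> mu x - Df x <= - m2.

(* If s stayed below L', then b >= (s_in - L')/2 would decay at a linear
   rate to negative values. *)
Lemma eventually_above T0 e : 0 < T0 -> e <= (s_in - L') / 2 ->
  (forall t, T0 <= t -> Rabs (s t + b t - s_in) < e) ->
  exists t2, T0 <= t2 /\ L' <= s t2.
Proof.
  intros HT0 He Hw. apply NNPP. intro Hn.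
  assert (Hall : forall t, T0 <= t -> s t < L').
  { intros t Ht. destruct (Rlt_or_le (s t) L'); auto. exfalso; apply Hn; exists t; auto. }
  set (be := (s_in - L') / 2). assert (Hbe : 0 < be) by (unfold be; lra).
  assert (Hbge : forall t, T0 <= t -> be <= b t).
  { intros t Ht. specialize (Hw t Ht). specialize (Hall t Ht).
    revert Hw; unfold Rabs; destruct Rcase_abs; unfold be in *; intros; lra. }
  assert (Hmb : 0 < m2 * be) by (apply Rmult_lt_0_compat; lra).
  set (t := T0 + (b T0 / (m2 * be) + 1)).
  assert (0 <= b T0 / (m2 * be)).
  { apply Rmult_le_pos; [left; apply Hbpos; lra| left; apply Rinv_0_lt_compat; auto]. }
  assert (Hup : b t - b T0 <= (- (m2 * be)) * (t - T0)).
  { apply (mvt_upper_bound b (fun r => mu (s r) * b r - Df (s r) * b r));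
      [intros r Hr; apply Hder; lra| | unfold t; lra].
    intros r Hr. specialize (Hbge r ltac:(lra)).
    specialize (HF2 (s r) ltac:(split; [apply Hs| left; apply Hall]; lra)). nra. }
  assert ((- (m2 * be)) * (t - T0) = - b T0 - m2 * be) by (unfold t; field; lra).
  specialize (Hbge t ltac:(unfold t; lra)). lra.
Qed.

(* Once s >= L' and the mass defect is small, s' > 0 whenever s = L'. *)
Lemma stays_above t2 e : 0 < t2 -> (Dmax + 1) * e <= (s_in - L') * m2 ->
  (forall t, t2 <= t -> Rabs (s t + b t - s_in) < e) ->
  L' <= s t2 -> forall t, t2 <= t -> L' <= s t.
Proof.
  intros Ht2 He Hw Hst2 t Ht. assert (- s t <= - L'); [|lra].
  apply (barrier (fun t => - s t) t2 (- L')); [| lra| auto].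
  intros r Hr. exists (- (- mu (s r) * b r + Df (s r) * (s_in - s r))).
  split; [apply (derivable_pt_lim_opp s); apply Hder; lra|]. intro Heq.
  assert (Hsr : s r = L') by lra.
  specialize (Hw r Hr). specialize (Hmu r ltac:(lra)). specialize (HF2 (s r) ltac:(lra)).
  set (w := s r + b r - s_in) in *.
  replace (b r) with (w + s_in - s r) by (unfold w; ring).
  assert (mu (s r) * w <= (Dmax + 1) * Rabs w).
  { pose proof (Rle_abs w). pose proof (Rabs_pos w). nra. }
  assert ((Dmax + 1) * Rabs w < (Dmax + 1) * e) by (apply Rmult_lt_compat_l; lra).
  rewrite Hsr in *. nra.
Qed.

End Lower.

Lemma eventually_trapped L L' m1 m2 :
  0 <= L' -> L' < L -> L < s_in ->
  0 < m1 -> (forall x, L <= x <= s_in -> m1 <= mu x - Df x) ->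
  0 < m2 -> (forall x, 0 <= x <= L' -> mu x - Df x <= - m2) ->
  exists T, forall t, T <= t -> L' <= s t <= L.
Proof.
  intros HL' HLL HL Hm1 HF1 Hm2 HF2.
  set (e := Rmin (Rmin ((s_in - L) * m1 / (Dmax + 1)) ((s_in - L') * m2 / (Dmax + 1)))
                 ((s_in - L') / 2)).
  assert (HDmax : 0 < Dmax) by (specialize (HDf 0); lra).
  assert (Hfrac : forall A, 0 <= A -> e <= A / (Dmax + 1) -> (Dmax + 1) * e <= A).
  { intros A HA HeA. assert (A = A / (Dmax + 1) * (Dmax + 1)) by (field; lra). nra. }
  assert (He1 : (Dmax + 1) * e <= (s_in - L) * m1).
  { apply Hfrac; [nra| unfold e; eapply Rle_trans; apply Rmin_l]. }
  assert (He2 : (Dmax + 1) * e <= (s_in - L') * m2).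
  { apply Hfrac; [nra| unfold e; eapply Rle_trans; [apply Rmin_l| apply Rmin_r]]. }
  assert (He3 : e <= (s_in - L') / 2) by (unfold e; apply Rmin_r).
  assert (He : 0 < e).
  { unfold e. repeat apply Rmin_glb_lt; apply Rdiv_lt_0_compat; nra. }
  destruct (mass_defect_vanishes e He) as [T0 [HT0 Hw]].
  assert (HL's : 0 <= L' < s_in) by lra.
  destruct (eventually_below L m1 Hm1 HF1 T0 e ltac:(lra) Hw) as [t1 [Ht1 Hst1]].
  destruct (eventually_above L' m2 HL's Hm2 HF2 T0 e ltac:(lra) He3 Hw) as [t2 [Ht2 Hst2]].
  exists (Rmax t1 t2). intros t Ht.
  pose proof (Rmax_l t1 t2). pose proof (Rmax_r t1 t2).
  split.
  - apply (stays_above L' m2 HL's HF2 t2 e); auto; try lra. intros r Hr; apply Hw; lra.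
  - apply (stays_below L m1 HL HF1 t1 e); auto; try lra. intros r Hr; apply Hw; lra.
Qed.

End ClosedLoopDynamics.

(* The closed-loop feedback law D(s) = sat(Dbar - G1 (s - sbar)) and the
   equilibrium map H(x) = mu(x) + G1 (x - sbar), whose root H(x) = Dbar is the
   equilibrium substrate concentration (there mu(x) = D(x)). *)
Definition feedback (Dmin Dmax G1 sbar Dbar y : R) : R :=
  sat Dmin Dmax (Dbar - G1 * (y - sbar)).

Definition equilibrium_map (mu : R -> R) (G1 sbar x : R) : R := mu x + G1 * (x - sbar).

Section Equilibrium.
Variables (mu mu' : R -> R) (s_in s_min Dmin Dmax G1 sbar : R).
Hypothesis Hsmin : 0 < s_min < s_in.
Hypothesis HD : 0 < Dmin < Dmax.
Hypothesis HG1 : 0 < G1.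
Hypothesis Hsbar : s_min <= sbar < s_in.
Hypothesis Hmu_deriv : forall s, 0 <= s <= s_in -> has_deriv_within 0 s_in mu s (mu' s).
Hypothesis Hmu_nonneg : forall s, 0 <= s <= s_in -> 0 <= mu s.
Hypothesis Hmu0 : mu 0 = 0.
Hypothesis HDmin : forall s, s_min <= s <= s_in -> Dmin < mu s.
Hypothesis HDmax : forall s, 0 <= s <= s_in -> mu s < Dmax.
Hypothesis HG1_mu' : forall s, 0 <= s <= s_in -> - mu' s < G1.
Hypothesis HG1_Dbar : forall Dbar, Dmin < Dbar < Dmax ->
  - ((mu s_in - Dbar) / (s_in - sbar)) < G1.

Lemma equilibrium_map_deriv x : 0 < x < s_in ->
  derivable_pt_lim (equilibrium_map mu G1 sbar) x (mu' x + G1).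
Proof.
  intros Hx.
  pose proof (deriv_within_interior _ _ _ _ _ (Hmu_deriv x ltac:(lra)) Hx) as Hm.
  pose proof (derivable_pt_lim_scal _ G1 x _ (derivable_pt_lim_minus _ _ x _ _
    (derivable_pt_lim_id x) (derivable_pt_lim_const sbar x))) as Hl.
  replace (mu' x + G1) with (mu' x + G1 * (1 - 0)) by ring.
  exact (derivable_pt_lim_plus _ _ x _ _ Hm Hl).
Qed.

(* H' = mu' + G1 > 0, so H is strictly increasing on (0,s_in). *)
Lemma equilibrium_map_increasing y z : 0 < y -> y < z -> z < s_in ->
  equilibrium_map mu G1 sbar y < equilibrium_map mu G1 sbar z.
Proof.
  intros Hy Hyz Hz.
  destruct (MVT_cor2 (equilibrium_map mu G1 sbar) (fun x => mu' x + G1) y z Hyz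
      ltac:(intros; apply equilibrium_map_deriv; lra)) as [c [Hc Hc']].
  specialize (HG1_mu' c ltac:(lra)). nra.
Qed.

(* H(0) < Dbar < H(s_in): the second inequality is the hypothesis on G1. *)
Lemma equilibrium_map_ends Dbar : Dmin < Dbar < Dmax ->
  equilibrium_map mu G1 sbar 0 < Dbar /\ Dbar < equilibrium_map mu G1 sbar s_in.
Proof.
  intros HDb. unfold equilibrium_map. rewrite Hmu0. split; [nra|].
  specialize (HG1_Dbar Dbar HDb).
  set (q := (mu s_in - Dbar) / (s_in - sbar)) in *.
  assert (mu s_in - Dbar = q * (s_in - sbar)) by (unfold q; field; lra). nra.
Qed.

(* Intermediate value theorem for the continuous map H on [0,s_in]. *)
Lemma equilibrium_exists Dbar : Dmin < Dbar < Dmax ->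
  exists x, 0 < x < s_in /\ equilibrium_map mu G1 sbar x = Dbar.
Proof.
  intros HDb. destruct (equilibrium_map_ends Dbar HDb) as [H0 Hsin].
  set (g := fun y => mu y + (G1 * (y - sbar) - Dbar)).
  assert (Hgc : continuity (fun x => g (clamp 0 s_in x))).
  { intro c. apply continuous_clamp; [lra|]. intros x Hx.
    apply continuous_within_plus_lipschitz with G1; [lra| |].
    - exact (deriv_within_continuous _ _ _ _ _ (Hmu_deriv x Hx)).
    - intro y. replace (G1 * (y - sbar) - Dbar - (G1 * (x - sbar) - Dbar)) with (G1 * (y - x))
        by ring.
      rewrite Rabs_mult, Rabs_pos_eq by lra. lra. }
  unfold equilibrium_map in H0, Hsin.
  destruct (IVT _ 0 s_in Hgc ltac:(lra)) as [z [Hz Hgz]];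
    [unfold g; rewrite clamp_id by lra; lra| unfold g; rewrite clamp_id by lra; lra|].
  unfold g in Hgz. rewrite clamp_id in Hgz by lra.
  exists z. unfold equilibrium_map.
  assert (z <> 0) by (intro; subst; lra). assert (z <> s_in) by (intro; subst; lra).
  split; lra.
Qed.

Lemma equilibrium_map_sign Dbar x y : Dmin < Dbar < Dmax ->
  0 < x < s_in -> equilibrium_map mu G1 sbar x = Dbar -> 0 <= y <= s_in ->
  (y < x -> equilibrium_map mu G1 sbar y < Dbar) /\
  (x < y -> Dbar < equilibrium_map mu G1 sbar y).
Proof.
  intros HDb Hx HHx Hy. destruct (equilibrium_map_ends Dbar HDb) as [H0 Hsin].
  split; intros Hxy.
  - destruct (Rle_lt_or_eq _ _ (proj1 Hy)) as [Hlt| <-]; auto.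
    rewrite <- HHx. apply equilibrium_map_increasing; lra.
  - destruct (Rle_lt_or_eq _ _ (proj2 Hy)) as [Hlt| ->]; auto.
    rewrite <- HHx. apply equilibrium_map_increasing; lra.
Qed.

(* The net growth rate mu - D has the sign of H - Dbar; in the saturated
   regimes this uses mu < Dmax everywhere and mu > Dmin above s_min. *)
Lemma net_growth_sign Dbar y : Dmin < Dbar < Dmax -> 0 <= y <= s_in ->
  (equilibrium_map mu G1 sbar y < Dbar -> mu y - feedback Dmin Dmax G1 sbar Dbar y < 0) /\
  (Dbar < equilibrium_map mu G1 sbar y -> 0 < mu y - feedback Dmin Dmax G1 sbar Dbar y).
Proof.
  intros HDb Hy. pose proof (HDmax y Hy).
  unfold feedback, sat, equilibrium_map.
  destruct (Rlt_dec Dmax _) as [H1|H1]; [split; intros; lra|].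
  destruct (Rlt_dec _ Dmin) as [H2|H2]; [|split; intros; lra].
  assert (sbar < y) by nra. specialize (HDmin y ltac:(lra)). split; intros; lra.
Qed.

Lemma net_growth_continuous Dbar y : 0 <= y <= s_in ->
  continuous_within 0 s_in (fun z => mu z - feedback Dmin Dmax G1 sbar Dbar z) y.
Proof.
  intros Hy. apply (continuous_within_plus_lipschitz _ _ _ _ _ G1); [lra| |].
  - exact (deriv_within_continuous _ _ _ _ _ (Hmu_deriv y Hy)).
  - intro z. unfold feedback.
    set (Dz := sat Dmin Dmax (Dbar - G1 * (z - sbar))).
    set (Dy := sat Dmin Dmax (Dbar - G1 * (y - sbar))).
    replace (- Dz - - Dy) with (Dy - Dz) by ring. unfold Dz, Dy.
    eapply Rle_trans; [apply sat_lipschitz; lra|].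
    replace (Dbar - G1 * (y - sbar) - (Dbar - G1 * (z - sbar))) with (G1 * (z - y)) by ring.
    rewrite Rabs_mult, Rabs_pos_eq by lra. lra.
Qed.

Lemma net_growth_bounds Dbar x e : Dmin < Dbar < Dmax ->
  0 < x < s_in -> equilibrium_map mu G1 sbar x = Dbar ->
  0 < e -> e <= x -> e <= s_in - x ->
  exists m1 m2, 0 < m1 /\ 0 < m2 /\
    (forall y, x + e / 2 <= y <= s_in -> m1 <= mu y - feedback Dmin Dmax G1 sbar Dbar y) /\
    (forall y, 0 <= y <= x - e / 2 -> mu y - feedback Dmin Dmax G1 sbar Dbar y <= - m2).
Proof.
  intros HDb Hx HHx He Hex Hesx.
  set (F := fun y => mu y - feedback Dmin Dmax G1 sbar Dbar y).
  destruct (positive_lower_bound 0 s_in F (x + e / 2) s_in ltac:(lra) ltac:(lra) ltac:(lra)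
      (net_growth_continuous Dbar)) as [m1 [Hm1 Hup]].
  { intros y Hy. apply (net_growth_sign Dbar y HDb ltac:(lra)).
    apply (equilibrium_map_sign Dbar x y); auto; lra. }
  destruct (positive_lower_bound 0 s_in (fun y => - F y) 0 (x - e / 2)
      ltac:(lra) ltac:(lra) ltac:(lra)) as [m2 [Hm2 Hlo]].
  { intros y Hy. apply continuous_within_opp, net_growth_continuous; auto. }
  { intros y Hy. enough (F y < 0) by lra. apply (net_growth_sign Dbar y HDb ltac:(lra)).
    apply (equilibrium_map_sign Dbar x y); auto; lra. }
  exists m1, m2. repeat split; auto.
  intros y Hy. specialize (Hlo y Hy). unfold F in Hlo. lra.
Qed.

Lemma equilibrium_attracts Dbar x : Dmin < Dbar < Dmax ->
  0 < x < s_in -> equilibrium_map mu G1 sbar x = Dbar ->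
  is_s_eq mu s_in Dmin Dmax G1 sbar Dbar x.
Proof.
  intros HDb Hx HHx s0 b0 s b Hs0 Hb0 [_ [_ [Hrc [Hsr Hder]]]] eps Heps.
  set (Df := feedback Dmin Dmax G1 sbar Dbar).
  assert (HDf : forall y, Dmin <= Df y <= Dmax) by (intro; apply sat_range; lra).
  assert (Hder' : forall t, 0 < t ->
    derivable_pt_lim s t (- mu (s t) * b t + Df (s t) * (s_in - s t)) /\
    derivable_pt_lim b t (mu (s t) * b t - Df (s t) * b t)) by exact Hder.
  assert (Hmu_s : forall t, 0 < t -> 0 <= mu (s t) <= Dmax).
  { intros t Ht. pose proof (Hsr t ltac:(lra)).
    split; [apply Hmu_nonneg| left; apply HDmax]; auto. }
  assert (Hbpos : forall t, 0 < t -> 0 < b t).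
  { apply (biomass_positive mu Df s_in Dmin Dmax s b HDf Hder' b0); auto.
    - intros t Ht. apply Hmu_s; auto.
    - intros ep Hep. destruct (Hrc ep Hep) as [d [Hd Hd']].
      exists d; split; auto. intros t Ht. apply Hd'; auto. }
  set (e := Rmin eps (Rmin x (s_in - x))).
  assert (He1 : e <= eps) by apply Rmin_l.
  assert (He2 : e <= x) by (unfold e; eapply Rle_trans; [apply Rmin_r| apply Rmin_l]).
  assert (He3 : e <= s_in - x) by (unfold e; eapply Rle_trans; [apply Rmin_r| apply Rmin_r]).
  assert (He : 0 < e) by (unfold e; repeat apply Rmin_glb_lt; lra).
  destruct (net_growth_bounds Dbar x e HDb Hx HHx He He2 He3)
    as [m1 [m2 [Hm1 [Hm2 [Hup Hlo]]]]].
  destruct (eventually_trapped mu Df s_in Dmin Dmax s b ltac:(lra) HDf Hder'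
      ltac:(intros t Ht; apply Hsr; lra) Hmu_s Hbpos (x + e / 2) (x - e / 2) m1 m2
      ltac:(lra) ltac:(lra) ltac:(lra) Hm1 Hup Hm2 Hlo) as [T HT].
  exists T. intros t Ht. specialize (HT t Ht). unfold Rabs; destruct Rcase_abs; lra.
Qed.

End Equilibrium.

(* s_eq(Dbar) is the root of H = Dbar (chosen for every Dbar by classical
   choice); it attracts all solutions, solves mu(x) = Dbar - G1 (x - sbar),
   and is the inverse of H, whence ds_eq/dDbar = 1 / (G1 + mu'(s_eq)). *)
Theorem mainTheorem3
  (mu mu' : R -> R) (s_in s_min Dmin Dmax G1 sbar : R)
  (Hsin : 0 < s_in) (Hsmin : 0 < s_min < s_in)
  (HD : 0 < Dmin < Dmax) (HG1 : 0 < G1)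
  (Hsbar : s_min <= sbar < s_in)
  (Hmu_deriv : forall s, 0 <= s <= s_in -> has_deriv_within 0 s_in mu s (mu' s))
  (Hmu'_cont : forall s, 0 <= s <= s_in -> continuous_within 0 s_in mu' s)
  (Hmu_nonneg : forall s, 0 <= s <= s_in -> 0 <= mu s)
  (Hmu0 : mu 0 = 0)
  (Hmu_pos : forall s, 0 < s <= s_in -> 0 < mu s)
  (HDmin : forall s, s_min <= s <= s_in -> Dmin < mu s)
  (HDmax : forall s, 0 <= s <= s_in -> mu s < Dmax)
  (HG1_mu' : forall s, 0 <= s <= s_in -> - mu' s < G1)
  (HG1_Dbar : forall Dbar, Dmin < Dbar < Dmax ->
     - ((mu s_in - Dbar) / (s_in - sbar)) < G1) :
  exists s_eq : R -> R,
    forall Dbar, Dmin < Dbar < Dmax ->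
      is_s_eq mu s_in Dmin Dmax G1 sbar Dbar (s_eq Dbar) /\
      mu (s_eq Dbar) = Dbar - G1 * (s_eq Dbar - sbar) /\
      derivable_pt_lim s_eq Dbar (1 / (G1 + mu' (s_eq Dbar))).
Proof.
  set (H := equilibrium_map mu G1 sbar).
  assert (Hroot : forall Dbar, exists x,
             Dmin < Dbar < Dmax -> 0 < x < s_in /\ H x = Dbar).
  { intro Dbar. destruct (classic (Dmin < Dbar < Dmax)) as [HDb|HDb]; [|exists 0; tauto].
    destruct (equilibrium_exists mu mu' s_in s_min Dmin Dmax G1 sbar Hsmin HD HG1 Hsbar
        Hmu_deriv Hmu0 HG1_Dbar Dbar HDb) as [x Hx].
    exists x; auto. }
  set (s_eq := fun Dbar => proj1_sig (constructive_indefinite_description _ (Hroot Dbar))).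
  assert (Hs_eq : forall Dbar, Dmin < Dbar < Dmax -> 0 < s_eq Dbar < s_in /\ H (s_eq Dbar) = Dbar).
  { intros Dbar. unfold s_eq. destruct (constructive_indefinite_description _ (Hroot Dbar)) as [x Hx].
    exact Hx. }
  exists s_eq. intros Dbar HDb. destruct (Hs_eq Dbar HDb) as [Hx HHx].
  split; [|split].
  - apply (equilibrium_attracts mu mu' s_in s_min Dmin Dmax G1 sbar); auto.
  - unfold H, equilibrium_map in HHx. lra.
  - rewrite Rplus_comm. apply (inverse_derivative H s_eq 0 s_in Dmin Dmax); auto.
    + intros y z Hy Hyz Hz. apply (equilibrium_map_increasing mu mu' s_in G1 sbar); auto.
    + apply (equilibrium_map_deriv mu mu' s_in G1 sbar); auto.
    + specialize (HG1_mu' (s_eq Dbar) ltac:(lra)). lra.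
Qed.
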